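(* Every set $S\subset\mathbb{Z}_{>1}$ has a unique L-primitive subset $\langle S\rangle\subset S$ with $\mathrm{L}_{\langle S\rangle}=\mathrm{L}_S$. In particular $\langle S\rangle=S$ if $S$ is L-primitive.
   Context: For an integer $a>1$ with largest prime factor $P(a)$, $\mathrm{L}_a=\{ba: b\in\mathbb{N},\ \text{every prime } p\mid b \text{ satisfies } p\ge P(a)\}$, and for a set $T$, $\mathrm{L}_T=\bigcup_{a\in T}\mathrm{L}_a$. A set $A\subset\mathbb{Z}_{>1}$ is L-primitive if $a'\notin\mathrm{L}_a$ for all distinct $a,a'\in A$. *)

From mathcomp Require Import all_boot.
Set Implicit Arguments. Unset Strict Implicit. Unset Printing Implicit Defensive.

Definition Lset (a n : nat) : Prop :=
  exists b, 0 < b /\ (forall p, prime p -> p %| b -> max_pdiv a <= p) /\ n = b * a.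

Definition LT (T : nat -> Prop) (n : nat) : Prop :=
  exists a, T a /\ Lset a n.

Definition Lprimitive (A : nat -> Prop) : Prop :=
  forall a a', A a -> A a' -> a <> a' -> ~ Lset a a'.

From mathcomp Require Import all_boot.
From Stdlib Require Import Classical.

Set Implicit Arguments.
Unset Strict Implicit.
Unset Printing Implicit Defensive.

(* L_a-membership is a partial order on nat (transitive because the largest
   prime factor grows along L-chains, antisymmetric because L_a contains no
   number below a). Hence the L-minimal elements of S are L-primitive, every
   element of S lies in L_c for some L-minimal c (strong induction), and any
   L-primitive generating subset of S must consist exactly of the L-minimal
   elements. *)

Lemma dvdn_leq_max_pdiv d n : 0 < n -> d %| n -> max_pdiv d <= max_pdiv n.
Proof.
move=> n_gt0 dvd_dn; have [d_le1 | d_gt1] := leqP d 1.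
  by case: d d_le1 dvd_dn => [|[|]].
apply: max_pdiv_max; rewrite mem_primes max_pdiv_prime //= n_gt0.
exact: dvdn_trans (max_pdiv_dvd d) dvd_dn.
Qed.

Lemma Lset_refl a : Lset a a.
Proof.
exists 1; do !split=> //; last by rewrite mul1n.
by move=> p p_pr; rewrite dvdn1 => /eqP p1; rewrite p1 in p_pr.
Qed.

Lemma Lset_leq a n : Lset a n -> a <= n.
Proof. by move=> [b [b_gt0 [_ ->]]]; rewrite leq_pmull. Qed.

Lemma Lset_anti a n : Lset a n -> Lset n a -> a = n.
Proof. by move=> Lan Lna; apply/eqP; rewrite eqn_leq !Lset_leq. Qed.

Lemma Lset_trans a m n : Lset a m -> Lset m n -> Lset a n.
Proof.
move=> [b [b_gt0 [Pb ->]]] [b' [b'_gt0 [Pb' ->]]].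
exists (b' * b); split; first by rewrite muln_gt0 b'_gt0 b_gt0.
split; last by rewrite mulnA.
have pdiv_le : max_pdiv a <= max_pdiv (b * a).
  have [-> | a_gt0] := posnP a; first by rewrite muln0.
  by rewrite dvdn_leq_max_pdiv ?muln_gt0 ?b_gt0 ?dvdn_mull.
move=> p p_pr; rewrite Euclid_dvdM // => /orP [dvd_pb' | dvd_pb]; last exact: Pb.
exact: leq_trans pdiv_le (Pb' p p_pr dvd_pb').
Qed.

Section LMinimal.

Variable S : nat -> Prop.

Definition Lminimal a := S a /\ forall a', S a' -> Lset a' a -> a' = a.

Lemma Lprimitive_Lminimal : Lprimitive Lminimal.
Proof.
by move=> a a' [Sa _] [_ min_a'] ne_aa' Laa'; apply: ne_aa' (min_a' a Sa Laa').
Qed.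

Lemma Lminimal_below a : S a -> exists2 c, Lminimal c & Lset c a.
Proof.
elim/ltn_ind: a => a IH Sa.
have [min_a | nmin_a] := classic (Lminimal a); first by exists a; last exact: Lset_refl.
have [a' [Sa' La'a ne_a'a]] : exists a', [/\ S a', Lset a' a & a' <> a].
  apply: NNPP => none; apply: nmin_a; split=> // a' Sa' La'a.
  by apply: NNPP => ne_a'a; apply: none; exists a'.
have lt_a'a : a' < a by rewrite ltn_neqAle Lset_leq // andbT; apply/eqP.
have [c min_c Lca'] := IH a' lt_a'a Sa'.
by exists c => //; apply: Lset_trans Lca' La'a.
Qed.

Lemma LT_Lminimal n : LT Lminimal n <-> LT S n.
Proof.
split; first by move=> [a [[Sa _] Lan]]; exists a.
move=> [a [Sa Lan]]; have [c min_c Lca] := Lminimal_below Sa.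
by exists c; split; last exact: Lset_trans Lca Lan.
Qed.

Lemma Lprimitive_generating_Lminimal T :
  (forall a, T a -> S a) -> Lprimitive T -> (forall n, LT T n <-> LT S n) ->
  forall a, T a <-> Lminimal a.
Proof.
move=> sub_TS prim_T LT_TS a; split.
  move=> Ta; split=> [|a' Sa' La'a]; first exact: sub_TS.
  have [c [Tc Lca']] : LT T a' by apply/LT_TS; exists a'; split; last exact: Lset_refl.
  have Lca := Lset_trans Lca' La'a.
  have [eq_ca | ne_ca] := classic (c = a); last by case: (prim_T c a Tc Ta ne_ca).
  by rewrite eq_ca in Lca'; apply: Lset_anti.
move=> [Sa min_a].
have [c [Tc Lca]] : LT T a by apply/LT_TS; exists a; split; last exact: Lset_refl.
by rewrite -(min_a c (sub_TS c Tc) Lca).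
Qed.

End LMinimal.

Theorem lemma5p4 (S : nat -> Prop) (HS : forall a, S a -> 1 < a) :
  (exists T : nat -> Prop,
     [/\ (forall a, T a -> S a), Lprimitive T, (forall n, LT T n <-> LT S n)
       & forall T' : nat -> Prop,
           (forall a, T' a -> S a) -> Lprimitive T' ->
           (forall n, LT T' n <-> LT S n) ->
           forall a, T' a <-> T a])
  /\
  (Lprimitive S ->
     forall T : nat -> Prop,
       (forall a, T a -> S a) -> Lprimitive T ->
       (forall n, LT T n <-> LT S n) ->
       forall a, T a <-> S a).
Proof.
split.
  exists (Lminimal S); split.
  - by move=> a [].
  - exact: Lprimitive_Lminimal.
  - exact: LT_Lminimal.
  - exact: Lprimitive_generating_Lminimal.
move=> prim_S T sub_TS prim_T LT_TS a.
rewrite (Lprimitive_generating_Lminimal sub_TS prim_T LT_TS).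
by rewrite -(Lprimitive_generating_Lminimal (S := S) (fun _ Sa => Sa) prim_S).
Qed.
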